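(* Suppose $P$ has a positive real eigenvalue different from $1$, and let $\theta$ be the largest positive real eigenvalue of $P$ different from $1$. Let $\mathcal G$ be a finite nonempty collection of allowed words such that some symbol $i\in\Sigma$ occurs in every word of $\mathcal G$. Then $0<\rho(H_{\mathcal G})\le-\ln\theta$.
   Context: Let $\Sigma=\{1,\dots,N\}$, $A$ an irreducible $N\times N$ $0$–$1$ matrix, $\Sigma_A=\{x\in\Sigma^{\mathbb N}:A_{x_nx_{n+1}}=1\ \forall n\}$ with left shift $\sigma$. A word is allowed if it occurs in some element of $\Sigma_A$; $C_u$ is the set of $x\in\Sigma_A$ beginning with $u$. $P$ is a row-stochastic matrix with $P_{ij}>0$ iff $A_{ij}=1$, $\mathbf p$ its stationary vector, $\mu=\mu_P$ the Markov measure $\mu(C_w)=p_{w_1}P_{w_1w_2}\cdots P_{w_{n-1}w_n}$. For a finite collection $\mathcal G$ of allowed words, $H_{\mathcal G}=\bigcup_{w\in\mathcal G}C_w$. For a hole $H$, $\mathcal W_m=\{x:\sigma^ix\notin H,0\le i\le m\}$ and $\rho(H)=-\lim_m\frac1m\ln\mu(\mathcal W_m)$. *)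

From HB Require Import structures.
From mathcomp Require Import all_boot all_order all_algebra.
From mathcomp Require Import all_classical all_reals all_analysis.
Set Implicit Arguments. Unset Strict Implicit. Unset Printing Implicit Defensive.
Import Order.TTheory GRing.Theory Num.Theory.
Local Open Scope ring_scope.

(* The alphabet Sigma = {1,...,N} is represented by 'I_N with N = n.+1
   (symbols numbered 0..N-1). Matrices are indexed by 'I_N. *)

Section Defs.
Variables (R : realType) (n : nat).
Local Notation N := n.+1.
Local Notation sym := 'I_N.

Definition zero_one_mx (A : 'M[R]_N) : Prop :=
  forall i j, A i j = 0 \/ A i j = 1.

Definition irreducible_mx (A : 'M[R]_N) : Prop :=
  forall i j : sym, exists k : nat, 0 < (A ^+ k) i j.

Definition in_SigmaA (A : 'M[R]_N) (x : nat -> sym) : Prop :=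
  forall k, A (x k) (x k.+1) = 1.

Definition allowed (A : 'M[R]_N) (w : seq sym) : Prop :=
  exists x : nat -> sym, in_SigmaA A x /\
    exists k : nat, forall t : nat, (t < size w)%N -> x (k + t)%N = nth ord0 w t.

Definition row_stochastic (P : 'M[R]_N) : Prop :=
  (forall i j, 0 <= P i j) /\ (forall i, \sum_j P i j = 1).

Definition compatible (A P : 'M[R]_N) : Prop :=
  forall i j, (0 < P i j) <-> (A i j = 1).

Definition stationary (P : 'M[R]_N) (p : 'rV[R]_N) : Prop :=
  (forall i, 0 <= p 0 i) /\ \sum_i p 0 i = 1 /\ p *m P = p.

Fixpoint trans_prod (P : 'M[R]_N) (a : sym) (t : seq sym) : R :=
  match t with
  | [::] => 1
  | b :: t' => P a b * trans_prod P b t'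
  end.

Definition mu_cyl (P : 'M[R]_N) (p : 'rV[R]_N) (w : seq sym) : R :=
  match w with
  | [::] => 1
  | a :: t => p 0 a * trans_prod P a t
  end.

(* y lies in the hole H_G = U_{w in G} C_w iff y begins with some w in G;
   here v is a (long enough) initial segment of y *)
Definition in_hole (G : seq (seq sym)) (v : seq sym) : bool :=
  has (fun w => prefix w v) G.

Definition maxlen (G : seq (seq sym)) : nat := \max_(w <- G) size w.

(* u (an initial segment of x of length m + maxlen G) witnesses
   x in W_m = { x : sigma^i x notin H_G, 0 <= i <= m } *)
Definition survives (G : seq (seq sym)) (m : nat) (u : seq sym) : bool :=
  all (fun i => ~~ in_hole G (drop i u)) (iota 0 m.+1).

(* mu(W_m): W_m is determined by the first m + maxlen G coordinates, so it
   is the disjoint union of the cylinders C_u over the surviving words u of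
   that length; its Markov measure is the sum of their cylinder measures. *)
Definition mu_W (P : 'M[R]_N) (p : 'rV[R]_N) (G : seq (seq sym)) (m : nat) : R :=
  \sum_(u : (m + maxlen G).-tuple sym | survives G m u) mu_cyl P p u.

End Defs.

From HB Require Import structures.
From mathcomp Require Import all_boot all_order all_algebra.
From mathcomp Require Import all_classical all_reals all_analysis.
From mathcomp Require Import lra ring.
Import Order.TTheory GRing.Theory Num.Theory.
Import numFieldNormedType.Exports.
Local Open Scope classical_set_scope.
Local Open Scope ring_scope.
Set Implicit Arguments. Unset Strict Implicit. Unset Printing Implicit Defensive.

(* Let L be the maximal length of the words of G.  Conditioning on the first
   L symbols writes mu(W_m) as an average, over the initial windows, of the
   probability of surviving m more steps; the largest of these, B_m, satisfies
   c B_m <= mu(W_m) <= B_m and B_(m+1+k) <= B_m B_k, so by Fekete's lemma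
   -ln mu(W_m) / m converges to rho = sup_k -ln B_k / (k+1).  We have rho > 0
   because from every window the chain reaches a word of G with positive
   probability.  Conversely, every path avoiding the symbol i common to all the
   words of G survives, so B_m dominates the powers of the taboo matrix Q
   (P with row and column i removed); an eigenvalue theta <> 1 of P forces
   Q^k to decay no faster than min(theta, 1)^k, whence rho <= -ln theta. *)

Section TupleSum.
Variables (R : realType) (T : finType).

Definition tuple_sum (k : nat) (F : seq T -> R) : R := \sum_(u : k.-tuple T) F u.

Lemma tuple_sum0 F : tuple_sum 0 F = F [::].
Proof. by rewrite /tuple_sum (big_pred1 [tuple]) // => u /=; apply/esym/eqP/tuple0. Qed.

Lemma tuple_sumS k F :
  tuple_sum k.+1 F = \sum_(j : T) tuple_sum k (fun e => F (j :: e)).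
Proof.
rewrite /tuple_sum pair_big /=.
rewrite (reindex (fun p : T * k.-tuple T => cons_tuple p.1 p.2)) /=.
  by apply: eq_bigr => -[j e].
exists (fun u : k.+1.-tuple T => (thead u, behead_tuple u)).
- by case=> j e _ /=; congr pair; apply/val_inj.
- by move=> u _; apply/val_inj => /=; rewrite [in RHS](tuple_eta u).
Qed.

Lemma tuple_sum_cat a b F :
  tuple_sum (a + b) F = tuple_sum a (fun s => tuple_sum b (fun e => F (s ++ e))).
Proof.
elim: a F => [|a IH] F; first by rewrite add0n tuple_sum0.
by rewrite addSn !tuple_sumS; apply: eq_bigr => j _; rewrite IH.
Qed.

Lemma eq_tuple_sum k F1 F2 : (forall s, size s = k -> F1 s = F2 s) ->
  tuple_sum k F1 = tuple_sum k F2.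
Proof. by move=> H; apply: eq_bigr => u _; rewrite H // size_tuple. Qed.

Lemma ler_tuple_sum k F1 F2 : (forall s, size s = k -> F1 s <= F2 s) ->
  tuple_sum k F1 <= tuple_sum k F2.
Proof. by move=> H; apply: ler_sum => u _; rewrite H // size_tuple. Qed.

Lemma tuple_sum_ge0 k F : (forall s, size s = k -> 0 <= F s) -> 0 <= tuple_sum k F.
Proof. by move=> H; apply: sumr_ge0 => u _; rewrite H // size_tuple. Qed.

Lemma tuple_sumZ k c F : tuple_sum k (fun s => c * F s) = c * tuple_sum k F.
Proof. by rewrite /tuple_sum mulr_sumr. Qed.

Lemma ler_tuple_sum_term k F s : (forall s, size s = k -> 0 <= F s) ->
  size s = k -> F s <= tuple_sum k F.
Proof.
move=> F_ge0 /eqP sk; rewrite /tuple_sum (bigD1 (Tuple sk)) //= lerDl.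
by apply: sumr_ge0 => u _; rewrite F_ge0 // size_tuple.
Qed.

End TupleSum.

Lemma ler_psum_term (R : numDomainType) (I : finType) (F : I -> R) j :
  (forall i, 0 <= F i) -> F j <= \sum_i F i.
Proof. by move=> F_ge0; rewrite (bigD1 j) //= lerDl sumr_ge0. Qed.

Lemma pmulr_gt0_factors (R : numDomainType) (x y : R) :
  0 <= x -> 0 <= y -> 0 < x * y -> 0 < x /\ 0 < y.
Proof.
move=> x0 y0 xy0; split; rewrite lt_def ?x0 ?y0 andbT; apply/eqP => h;
  by move: xy0; rewrite h ?mul0r ?mulr0 ltxx.
Qed.

Lemma le0_geometric_bound (R : realType) (x M q : R) :
  0 <= q -> q < 1 -> (forall K, x <= M * q ^+ K) -> x <= 0.
Proof.
move=> q0 q1 xle.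
have Mq0 : (fun K => M * q ^+ K) @ \oo --> 0.
  by rewrite -(mulr0 M); apply: cvgMl_tmp; apply: cvg_expr; rewrite ger0_norm.
by apply: (ler_cvg_to (cvg_cst x) Mq0); apply: nearW.
Qed.

Section NonnegMatrix.
Variables (R : realType) (n : nat).
Local Notation N := n.+1.

Lemma trans_prod_cat (M : 'M[R]_N) a c d :
  trans_prod M a (c ++ d) = trans_prod M a c * trans_prod M (last a c) d.
Proof. by elim: c a => [|b c IH] a /=; rewrite ?mul1r // IH mulrA. Qed.

Lemma trans_prod_rcons (M : 'M[R]_N) a c b :
  trans_prod M a (rcons c b) = trans_prod M a c * M (last a c) b.
Proof. by rewrite -cats1 trans_prod_cat /= mulr1. Qed.

Variable M : 'M[R]_N.
Hypothesis M_ge0 : forall a b, 0 <= M a b.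

Lemma trans_prod_ge0 a c : 0 <= trans_prod M a c.
Proof. by elim: c a => [|b c IH] a /=; rewrite ?ler01 ?mulr_ge0. Qed.

Lemma ler_trans_prod (M' : 'M[R]_N) : (forall a b, M a b <= M' a b) ->
  forall a c, trans_prod M a c <= trans_prod M' a c.
Proof.
move=> MM' a c; elim: c a => [|d c IH] a //=.
by rewrite ler_pM ?trans_prod_ge0.
Qed.

Lemma mxpow_ge0 k a b : 0 <= (M ^+ k) a b.
Proof.
elim: k a b => [|k IH] a b; first by rewrite expr0 mxE ler0n.
by rewrite exprSr -mulmxE mxE; apply: sumr_ge0 => c _; apply: mulr_ge0.
Qed.

Lemma mxpow_gt0_path k a b : 0 < (M ^+ k) a b ->
  exists c : seq 'I_N, [/\ size c = k, last a c = b & 0 < trans_prod M a c].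
Proof.
elim: k a b => [|k IH] a b.
  rewrite expr0 mxE; case: eqP => [->|]; last by rewrite ltxx.
  by exists [::]; rewrite /= ltr01.
rewrite exprSr -mulmxE mxE => sum_gt0.
have [c /andP[_]] : exists c, true && (0 < (M ^+ k) a c * M c b).
  by apply: psumr_neq0P => [c _|]; [rewrite mulr_ge0 ?mxpow_ge0 | apply/eqP/lt0r_neq0].
move=> /(pmulr_gt0_factors (mxpow_ge0 _ _ _) (M_ge0 _ _)) [/IH [c' [<- <- pc']] Mcb].
by exists (rcons c' b); rewrite size_rcons last_rcons trans_prod_rcons mulr_gt0.
Qed.

End NonnegMatrix.
Section Superadditive.
Variables (R : realType) (w : nat -> R).
Hypothesis w_ge0 : forall m, 0 <= w m.
Hypothesis w_superadd : forall m k, w m + w k <= w (m.+1 + k).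

Lemma superadd_iter n0 q t : q%:R * w n0 <= w (q * n0.+1 + t).
Proof.
elim: q t => [|q IH] t; first by rewrite mul0r w_ge0.
rewrite mulSn -addnA; apply: le_trans (w_superadd _ _).
by rewrite -[q.+1]add1n natrD mulrDl mul1r lerD2l IH.
Qed.

Lemma superadd_lower n0 m : ((m.+1)%:R / (n0.+1)%:R - 1) * w n0 <= w m.
Proof.
rewrite [in w m](divn_eq m n0.+1); apply: le_trans (superadd_iter _ _ _).
rewrite ler_wpM2r // lerBlDr ler_pdivrMr // natr1 -natrM ler_nat.
rewrite mulSn addnC {1}(divn_eq m n0.+1) -addnS leq_add2l.
exact: ltn_pmod.
Qed.

Definition growth_rate : R := sup (range (fun k => w k / k.+1%:R)).

Variable b : R.
Hypothesis ratio_le : forall k, w k / k.+1%:R <= b.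

Let ratio_has_sup : has_sup (range (fun k => w k / k.+1%:R)).
Proof. by split; [exists (w 0%N / 1%:R), 0%N | exists b => _ [k _ <-]]. Qed.

Lemma ratio_le_growth_rate k : w k / k.+1%:R <= growth_rate.
Proof. by apply: ub_le_sup; [case: ratio_has_sup | exists k]. Qed.

Lemma growth_rate_le : growth_rate <= b.
Proof. by apply: ge_sup; [case: ratio_has_sup | move=> _ [k _ <-]]. Qed.

(* Fekete's lemma, for sequences at bounded distance from [w]. *)
Lemma cvg_perturbed_superadd (a : nat -> R) (kappa : R) :
  (forall m, `|a m - w m| <= kappa) ->
  (fun m => a m / m%:R) @ \oo --> growth_rate.
Proof.
move=> a_near; apply/cvgrPdist_le => eps eps0.
have [_ [n0 _ <-] rate_lt] := sup_adherent (divr_gt0 eps0 (ltr0Sn _ 1)) ratio_has_sup.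
set r := growth_rate in rate_lt *; set al := w n0 / _ in rate_lt.
have al0 : 0 <= al by rewrite divr_ge0.
near=> m.
have M0 : 0 < m%:R :> R by near: m; exact: nbhs_infty_gtr.
have Mup : r + kappa < eps * m%:R.
  by rewrite mulrC -ltr_pdivrMr //; near: m; exact: nbhs_infty_gtr.
have Mlow : w n0 + kappa <= eps / 2 * m%:R.
  by rewrite mulrC -ler_pdivrMr ?divr_gt0 //; near: m; exact: nbhs_infty_ger.
set M := m%:R in M0 Mup Mlow *.
have /andP[amw wam] : - kappa <= a m - w m <= kappa by rewrite -ler_norml.
have wm_up : w m <= r * (M + 1).
  by have := ratio_le_growth_rate m; rewrite ler_pdivrMr ?ltr0n // -natr1.
have wm_low : (M + 1) * al - w n0 <= w m.
  by have := superadd_lower n0 m; rewrite mulrBl mul1r mulrAC -mulrA natr1.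
have Mal : M * (r - eps / 2) <= M * al by rewrite ler_wpM2l ?ltW // ltrBlDr -ltrBlDl.
have am : a m = a m / M * M by rewrite divfK // lt0r_neq0.
set y := a m / M in am *.
rewrite ler_norml; apply/andP; split; rewrite -(ler_pM2r M0); lra.
Unshelve. all: end_near.
Qed.

End Superadditive.
Lemma mulmx_ge0 (R : numDomainType) m k l (X : 'M[R]_(m, k)) (Y : 'M[R]_(k, l)) :
  (forall a b, 0 <= X a b) -> (forall a b, 0 <= Y a b) ->
  forall a b, 0 <= (X *m Y) a b.
Proof. by move=> X0 Y0 a b; rewrite mxE; apply: sumr_ge0 => c _; rewrite mulr_ge0. Qed.

Section Stochastic.
Variables (R : realType) (n : nat) (P : 'M[R]_n.+1).
Local Notation N := n.+1.
Hypothesis P_stoch : row_stochastic P.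

Lemma stoch_ge0 a b : 0 <= P a b. Proof. by case: P_stoch. Qed.
Lemma stoch_row a : \sum_j P a j = 1. Proof. by case: P_stoch. Qed.

Lemma stoch_le1 a b : P a b <= 1.
Proof. by rewrite -(stoch_row a); apply: ler_psum_term => j; apply: stoch_ge0. Qed.

Lemma stoch_mul1 : P *m const_mx 1 = const_mx 1 :> 'cV_N.
Proof.
by apply/colP => a; rewrite !mxE -[RHS](stoch_row a); under eq_bigr do rewrite mxE mulr1.
Qed.

Lemma trans_prod_le1 a c : trans_prod P a c <= 1.
Proof.
elim: c a => [|b c IH] a //=.
by rewrite -(mul1r 1) ler_pM ?stoch_le1 ?stoch_ge0 ?trans_prod_ge0 //; apply: stoch_ge0.
Qed.

Lemma tuple_sum_trans_prod k a : tuple_sum k (trans_prod P a) = 1.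
Proof.
elim: k a => [|k IH] a; first by rewrite tuple_sum0.
rewrite tuple_sumS -(stoch_row a); apply: eq_bigr => j _ /=.
by rewrite (tuple_sumZ _ _ (trans_prod P j)) IH mulr1.
Qed.

End Stochastic.

Section Taboo.
Variables (R : realType) (n : nat) (P : 'M[R]_n.+1) (i0 : 'I_n.+1).
Local Notation N := n.+1.
Hypothesis P_stoch : row_stochastic P.

Definition taboo_mx : 'M[R]_N :=
  \matrix_(a, b) if (a != i0) && (b != i0) then P a b else 0.
Local Notation Q := taboo_mx.

Lemma taboo_ge0 a b : 0 <= Q a b.
Proof. by rewrite mxE; case: ifP => _; rewrite ?stoch_ge0. Qed.

Lemma taboo_le a b : Q a b <= P a b.
Proof. by rewrite mxE; case: ifP => _; rewrite ?stoch_ge0. Qed.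

Lemma taboo_pow_rowsum k a : 0 <= (Q ^+ k *m (const_mx 1 : 'cV_N)) a 0 <= 1.
Proof.
elim: k a => [|k IH] a; first by rewrite expr0 mul1mx mxE ler01 lexx.
rewrite exprS -mulmxE -mulmxA mxE; apply/andP; split.
  by apply: sumr_ge0 => j _; rewrite mulr_ge0 ?taboo_ge0 //; case/andP: (IH j).
rewrite -[leRHS](stoch_row P_stoch a); apply: ler_sum => j _.
apply: le_trans (taboo_le a j).
by rewrite ler_piMr ?taboo_ge0 //; case/andP: (IH j).
Qed.

Lemma taboo_pow_le_rowsum k a b : (Q ^+ k) a b <= (Q ^+ k *m (const_mx 1 : 'cV_N)) a 0.
Proof.
rewrite mxE; under eq_bigr do rewrite mxE mulr1.
by apply: ler_psum_term => j; exact: (mxpow_ge0 taboo_ge0 k a j).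
Qed.

Lemma taboo_pow_le1 k a b : (Q ^+ k) a b <= 1.
Proof.
by apply: le_trans (taboo_pow_le_rowsum k a b) _; case/andP: (taboo_pow_rowsum k a).
Qed.

Definition off_i0_row (y : 'rV[R]_N) : 'rV[R]_N := \row_b (if b != i0 then y 0 b else 0).
Definition off_i0_col (z : 'cV[R]_N) : 'cV[R]_N := \col_a (if a != i0 then z a 0 else 0).

Local Notation from_i0 := (off_i0_row (row i0 P)).
Local Notation to_i0 := (off_i0_col (col i0 P)).

Lemma off_i0_row_i0 y : off_i0_row y 0 i0 = 0.
Proof. by rewrite mxE eqxx. Qed.

Lemma off_i0_row_mul y : off_i0_row (y *m P) = y 0 i0 *: from_i0 + off_i0_row y *m Q.
Proof.
apply/rowP => b; rewrite !mxE.
case: (eqVneq b i0) => [->|Hb] /=.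
  by rewrite mulr0 add0r; apply/esym/big1 => a _; rewrite !mxE eqxx andbF mulr0.
rewrite (bigD1 i0) //= [X in _ = _ + X](bigD1 i0) //= !mxE eqxx /= mul0r add0r.
by congr (_ + _); apply: eq_bigr => a Ha; rewrite !mxE Ha Hb.
Qed.

Lemma mul_i0_row y : (y *m P) 0 i0 = y 0 i0 * P i0 i0 + (off_i0_row y *m to_i0) 0 0.
Proof.
rewrite !mxE (bigD1 i0) //= [X in _ = _ + X](bigD1 i0) //= !mxE eqxx /= mul0r add0r.
by congr (_ + _); apply: eq_bigr => a Ha; rewrite !mxE Ha.
Qed.

Lemma off_i0_col_mul z : off_i0_col (P *m z) = z i0 0 *: to_i0 + Q *m off_i0_col z.
Proof.
apply/colP => a; rewrite !mxE.
case: (eqVneq a i0) => [->|Ha] /=.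
  by rewrite mulr0 add0r; apply/esym/big1 => b _; rewrite !mxE eqxx mul0r.
rewrite (bigD1 i0) //= [X in _ = _ + X](bigD1 i0) //= !mxE eqxx andbF mul0r add0r.
rewrite [z i0 0 * _]mulrC.
by congr (_ + _); apply: eq_bigr => b Hb; rewrite !mxE Ha Hb.
Qed.

Lemma mul_i0_col z : (P *m z) i0 0 = P i0 i0 * z i0 0 + (from_i0 *m off_i0_col z) 0 0.
Proof.
rewrite !mxE (bigD1 i0) //= [X in _ = _ + X](bigD1 i0) //= !mxE eqxx /= mul0r add0r.
by congr (_ + _); apply: eq_bigr => b Hb; rewrite !mxE Hb.
Qed.

Local Notation ones_off_i0 := (off_i0_col (const_mx 1)).

Lemma from_i0_ge0 a b : 0 <= from_i0 a b.
Proof. by rewrite !mxE; case: ifP; rewrite ?stoch_ge0. Qed.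

Lemma to_i0_ge0 a b : 0 <= to_i0 a b.
Proof. by rewrite !mxE; case: ifP; rewrite ?stoch_ge0. Qed.

Lemma to_i0_le1 a b : to_i0 a b <= 1.
Proof. by rewrite !mxE; case: ifP; rewrite ?ler01 ?stoch_le1. Qed.

Lemma ones_off_i0_ge0 a b : 0 <= ones_off_i0 a b.
Proof. by rewrite !mxE; case: ifP; rewrite ?ler01. Qed.

Lemma return_identity K :
  1 - P i0 i0 = \sum_(0 <= k < K) (from_i0 *m Q ^+ k *m to_i0) 0 0
                + (from_i0 *m Q ^+ K *m ones_off_i0) 0 0.
Proof.
have ones_eq : ones_off_i0 = to_i0 + Q *m ones_off_i0.
  by rewrite -[in LHS](stoch_mul1 P_stoch) off_i0_col_mul mxE scale1r.
have := mul_i0_col (const_mx 1); rewrite stoch_mul1 // ![const_mx _ _ _]mxE mulr1 => one_eq.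
pose h k := (from_i0 *m Q ^+ k *m ones_off_i0) 0 0.
have hS k : (from_i0 *m Q ^+ k *m to_i0) 0 0 = - h k.+1 - - h k.
  suff -> : h k = (from_i0 *m Q ^+ k *m to_i0) 0 0 + h k.+1 by ring.
  by rewrite /h {1}ones_eq mulmxDr exprSr -mulmxE !mulmxA mxE.
rewrite (telescope_sumr_eq (fun k => - h k)) => [|//|k _]; last exact: hS.
by rewrite /h expr0 mulmx1; lra.
Qed.

Section Decay.
Variables (theta C r : R).
Hypotheses (theta_gt0 : 0 < theta) (C_ge0 : 0 <= C) (r_ge0 : 0 <= r).
Hypothesis decay : forall k a b, a != i0 -> (Q ^+ k) a b <= C * r ^+ k.

Lemma taboo_norm_bound (y : 'rV[R]_N) (z : 'cV[R]_N) K :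
  y 0 i0 = 0 -> (forall b, `|z b 0| <= 1) ->
  `|(y *m Q ^+ K *m z) 0 0| <= (\sum_a `|y 0 a|) * N%:R * C * r ^+ K.
Proof.
move=> y_i0 z_le1; rewrite mxE; apply: le_trans (ler_norm_sum _ _ _) _.
apply: (@le_trans _ _ (\sum_(b : 'I_N) (\sum_a `|y 0 a|) * (C * r ^+ K))); last first.
  by rewrite sumr_const card_ord -[leLHS]mulr_natr le_eqVlt; apply/orP; left; apply/eqP; ring.
apply: ler_sum => b _; rewrite normrM.
apply: (@le_trans _ _ `|(y *m Q ^+ K) 0 b|); first by rewrite -[leRHS]mulr1 ler_wpM2l.
rewrite mxE (le_trans (ler_norm_sum _ _ _)) // mulr_suml.
apply: ler_sum => a _; rewrite normrM.
case: (eqVneq a i0) => [->|a_i0]; first by rewrite y_i0 normr0 !mul0r.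
by rewrite ler_wpM2l // ger0_norm ?decay //; exact: (mxpow_ge0 taboo_ge0).
Qed.

Lemma return_tail_bound K : 0 <= (from_i0 *m Q ^+ K *m ones_off_i0) 0 0
  <= (\sum_a `|from_i0 0 a|) * N%:R * C * r ^+ K.
Proof.
have Qk_ge0 := mxpow_ge0 taboo_ge0 K.
have tail_ge0 : 0 <= (from_i0 *m Q ^+ K *m ones_off_i0) 0 0.
  by apply: mulmx_ge0 ones_off_i0_ge0 _ _; apply: mulmx_ge0 from_i0_ge0 Qk_ge0.
rewrite tail_ge0 -[leLHS]ger0_norm //; apply: taboo_norm_bound (off_i0_row_i0 _) _.
by move=> b; rewrite !mxE; case: ifP; rewrite ?normr0 ?normr1.
Qed.

Lemma to_i0_tail_bound (y : 'rV[R]_N) K : `|(off_i0_row y *m Q ^+ K *m to_i0) 0 0|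
  <= (\sum_a `|off_i0_row y 0 a|) * N%:R * C * r ^+ K.
Proof.
apply: (taboo_norm_bound (z := to_i0) K (off_i0_row_i0 _)) => b.
by rewrite ger0_norm ?to_i0_ge0 ?to_i0_le1.
Qed.

Section Eigenvector.
Variable v : 'rV[R]_N.
Hypotheses (v_eig : v *m P = theta *: v) (r_lt_theta : r < theta).

Lemma off_i0_row_eig : theta *: off_i0_row v = v 0 i0 *: from_i0 + off_i0_row v *m Q.
Proof.
rewrite -off_i0_row_mul v_eig; apply/rowP => b; rewrite !mxE.
by case: ifP; rewrite ?mulr0.
Qed.

Lemma eigvec_i0_neq0 : v != 0 -> v 0 i0 != 0.
Proof.
move=> v_neq0; apply: contraNneq v_neq0 => v_i0; apply/eqP/rowP => b; rewrite mxE.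
have off_v : off_i0_row v = v.
  by apply/rowP => c; rewrite mxE; case: eqVneq => // ->; rewrite v_i0.
have vQK K : v *m Q ^+ K = theta ^+ K *: v.
  elim: K => [|K IH]; first by rewrite expr0 mulmx1 scale1r.
  rewrite exprSr -mulmxE mulmxA IH -scalemxAl -{1}off_v -(add0r (_ *m Q)).
  by rewrite -(scale0r from_i0) -v_i0 -off_i0_row_eig off_v scalerA -exprSr.
apply/eqP; rewrite -normr_le0.
pose z : 'cV[R]_N := \col_a (a == b)%:R.
apply: (le0_geometric_bound (q := r / theta) (M := (\sum_a `|v 0 a|) * N%:R * C)).
- by rewrite divr_ge0 // ltW.
- by rewrite ltr_pdivrMr // mul1r.
move=> K; have := taboo_norm_bound (z := z) K v_i0.
have -> : (v *m Q ^+ K *m z) 0 0 = theta ^+ K * v 0 b.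
  rewrite vQK mxE (bigD1 b) //= big1 ?addr0 => [|a /negbTE ab]; last by rewrite !mxE ab mulr0.
  by rewrite !mxE eqxx mulr1.
have thK : 0 < theta ^+ K by rewrite exprn_gt0.
rewrite normrM (ger0_norm (ltW thK)) expr_div_n mulrA ler_pdivlMr // mulrC.
by apply => a; rewrite mxE; case: eqP; rewrite ?normr0 ?normr1 ?ler01.
Qed.

Lemma eigen_return_identity K : v 0 i0 != 0 ->
  theta - P i0 i0 = \sum_(0 <= k < K) (from_i0 *m Q ^+ k *m to_i0) 0 0 / theta ^+ k.+1
                  + (off_i0_row v *m Q ^+ K *m to_i0) 0 0 / (v 0 i0 * theta ^+ K).
Proof.
move=> v0; pose X k := (off_i0_row v *m Q ^+ k *m to_i0) 0 0.
have th0 : theta != 0 by rewrite gt_eqF.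
have XS k : X k.+1 = theta * X k - v 0 i0 * (from_i0 *m Q ^+ k *m to_i0) 0 0.
  have := congr1 (fun y : 'rV_N => y *m Q ^+ k *m to_i0) off_i0_row_eig.
  rewrite /= !mulmxDl -!scalemxAl -(mulmxA _ Q) mulmxE -exprS /X.
  set A := (off_i0_row v *m _ *m to_i0); set B := (from_i0 *m _ *m to_i0).
  set D := (_ *m Q ^+ k.+1 *m to_i0).
  by move/(congr1 (fun M : 'M[R]_1 => M 0 0)); rewrite !mxE => ->; ring.
rewrite (telescope_sumr_eq (fun k => - (X k / (v 0 i0 * theta ^+ k)))) => [|//|k _].
  have := mul_i0_row v; rewrite v_eig mxE => E.
  rewrite /X expr0 mulr1 mulmx1 opprK [RHS]addrC addNKr; apply: (mulIf v0).
  by rewrite divfK //; lra.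
by rewrite XS exprS; field; rewrite expf_neq0 ?v0 ?th0.
Qed.

End Eigenvector.

(* The chain restricted to the complement of [i0] dies out no faster than at
   rate [min theta 1]: the first-return generating function takes the value
   [1] at [1] and [theta] at [theta], and it is monotone where both converge. *)
Lemma taboo_decay_rate_ge : eigenvalue P theta -> theta != 1 -> Num.min theta 1 <= r.
Proof.
move=> /eigenvalueP [v v_eig v_neq0] th1; rewrite leNgt; apply/negP.
rewrite lt_min => /andP[r_th r1].
have v0 := eigvec_i0_neq0 v_eig r_th v_neq0.
pose g k := (from_i0 *m Q ^+ k *m to_i0) 0 0.
have g_ge0 k : 0 <= g k.
  apply: mulmx_ge0 to_i0_ge0 _ _; apply: mulmx_ge0 from_i0_ge0 (mxpow_ge0 taboo_ge0 k).
pose q := Num.max r (r / theta).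
have q_ge0 : 0 <= q by rewrite le_max r_ge0.
have q_lt1 : q < 1 by rewrite gt_max r1 ltr_pdivrMr // mul1r.
have rq K : r ^+ K <= q ^+ K by apply: lerXn2r; rewrite ?nnegrE // le_max lexx.
have rthq K : (r / theta) ^+ K <= q ^+ K.
  by apply: lerXn2r; rewrite ?nnegrE ?divr_ge0 ?(ltW theta_gt0) // le_max lexx orbT.
pose Mh := (\sum_a `|from_i0 0 a|) * N%:R * C.
pose Mx := (\sum_a `|off_i0_row v 0 a|) * N%:R * C / `|v 0 i0|.
have Mh_ge0 : 0 <= Mh by rewrite !mulr_ge0 ?sumr_ge0.
have hB K : 0 <= (from_i0 *m Q ^+ K *m ones_off_i0) 0 0 <= Mh * q ^+ K.
  have /andP[-> /le_trans] := return_tail_bound K; apply.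
  by apply: ler_wpM2l; [exact: Mh_ge0 | exact: rq].
have xB K : `|(off_i0_row v *m Q ^+ K *m to_i0) 0 0 / (v 0 i0 * theta ^+ K)| <= Mx * q ^+ K.
  have thK : 0 < theta ^+ K by rewrite exprn_gt0.
  apply: le_trans (ler_wpM2l _ (rthq K)); last by rewrite !mulr_ge0 ?sumr_ge0 ?invr_ge0.
  rewrite normf_div normrM (gtr0_norm thK) expr_div_n mulf_div.
  apply: ler_wpM2r; first by rewrite invr_ge0 mulr_ge0 // ltW.
  exact: to_i0_tail_bound.
have key K : `|theta - 1| <= (Mh + Mx) * q ^+ K.
  have R1 := eigen_return_identity v_eig K v0; have R2 := return_identity K.
  have /andP[h0 hq] := hB K; have /ler_normlP[xl xu] := xB K.
  case: (ltrgtP theta 1) => [th_lt1|th_gt1|th_eq1]; last by move/eqP: th1.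
  - have ST : \sum_(0 <= k < K) g k <= \sum_(0 <= k < K) g k / theta ^+ k.+1.
      apply: ler_sum => k _; rewrite ler_pdivlMr ?exprn_gt0 //.
      by rewrite ler_piMr // exprn_ile1 ?ltW.
    lra.
  - have ST : \sum_(0 <= k < K) g k / theta ^+ k.+1 <= \sum_(0 <= k < K) g k.
      apply: ler_sum => k _; rewrite ler_pdivrMr ?exprn_gt0 //.
      by rewrite ler_peMr // exprn_ege1 ?ltW.
    lra.
have := le0_geometric_bound q_ge0 q_lt1 key.
by rewrite normr_le0 subr_eq0 (negbTE th1).
Qed.

End Decay.
End Taboo.
Section Survival.
Variables (R : realType) (n : nat).
Local Notation N := n.+1.
Local Notation sym := 'I_N.
Variables (A P : 'M[R]_N) (p : 'rV[R]_N) (G : seq (seq sym)) (i0 : sym).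
Hypothesis HA01 : zero_one_mx A.
Hypothesis HAirr : irreducible_mx A.
Hypothesis HP : row_stochastic P.
Hypothesis HAP : compatible A P.
Hypothesis Hp : stationary P p.
Hypothesis HGne : G != [::].
Hypothesis HGall : forall w, w \in G -> allowed A w.
Hypothesis HGsym : forall w, w \in G -> i0 \in w.

Local Notation L := (maxlen G).
Let P_ge0 := stoch_ge0 HP.

Let A_ge0 a b : 0 <= A a b. Proof. by case: (HA01 a b) => ->; rewrite ?ler01. Qed.
Let p_ge0 a : 0 <= p 0 a. Proof. by case: Hp. Qed.

Lemma mu_cyl_ge0 s : 0 <= mu_cyl P p s.
Proof. by case: s => [|a s] /=; rewrite ?ler01 // mulr_ge0 ?trans_prod_ge0. Qed.

Lemma trans_prod_compatible_gt0 a c : 0 < trans_prod A a c -> 0 < trans_prod P a c.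
Proof.
elim: c a => [|b c IH] a //= /(pmulr_gt0_factors (A_ge0 _ _) (trans_prod_ge0 A_ge0 _ _)).
case=> Aab /IH; apply: mulr_gt0; apply/HAP.
by case: (HA01 a b) Aab => // ->; rewrite ltxx.
Qed.

Lemma irreducible_path a b : exists c, last a c = b /\ 0 < trans_prod P a c.
Proof.
have [k /(mxpow_gt0_path A_ge0) [c [_ <- Ac]]] := HAirr a b.
by exists c; split => //; apply: trans_prod_compatible_gt0.
Qed.

Lemma stationary_gt0 b : 0 < p 0 b.
Proof.
have [_ [p_sum1 p_inv]] := Hp.
have p_step a d : p 0 a * P a d <= p 0 d.
  rewrite -{2}p_inv mxE; apply: (ler_psum_term (F := fun x => p 0 x * P x d)) => x.
  exact: mulr_ge0.
have [a /andP[_ pa]] : exists a, true && (0 < p 0 a).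
  by apply: psumr_neq0P => [a _|]; [exact: p_ge0 | rewrite p_sum1; exact/eqP/oner_neq0].
have [c [<- Pc]] := irreducible_path a b.
elim: c a pa Pc => [|d c IH] a pa //=.
move=> /(pmulr_gt0_factors (P_ge0 _ _) (trans_prod_ge0 P_ge0 _ _)).
by case=> Pad; apply: IH; apply: lt_le_trans (p_step a d); apply: mulr_gt0.
Qed.

Lemma size_le_maxlen w : w \in G -> (size w <= L)%N.
Proof. by move=> Gw; apply: (leq_bigmax_seq (F := size)). Qed.

Lemma maxlen_gt0 : (0 < L)%N.
Proof.
have [w Gw] : exists w, w \in G by case: G HGne => // w G' _; exists w; exact: mem_head.
by apply: leq_trans (size_le_maxlen Gw); case: w {Gw} (HGsym Gw).
Qed.

Lemma in_hole_cat s t : (L <= size s)%N -> in_hole G (s ++ t) = in_hole G s.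
Proof.
move=> Ls; apply: eq_in_has => w Gw.
by rewrite !prefixE takel_cat // (leq_trans (size_le_maxlen Gw)).
Qed.

Definition safe (s : seq sym) : R := if in_hole G s then 0 else 1.

(* [survival k s]: probability that the chain, started with the window [s] of
   length [L], visits no word of [G] at the times [0, ..., k]; the window is
   slid one step at a time. *)
Fixpoint survival (k : nat) (s : seq sym) : R :=
  if k is k'.+1 then
    safe s * \sum_(j : sym) P (last ord0 s) j * survival k' (rcons (behead s) j)
  else safe s.

Lemma safe_ge0 s : 0 <= safe s. Proof. by rewrite /safe; case: ifP; rewrite ?ler01. Qed.
Lemma safe_le1 s : safe s <= 1. Proof. by rewrite /safe; case: ifP; rewrite ?ler01. Qed.

Lemma survival_bounds k s : 0 <= survival k s <= 1.
Proof.
elim: k s => [|k IH] s /=; first by rewrite safe_ge0 safe_le1.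
have IH0 j := andP (IH (rcons (behead s) j)).
set S := \sum_j _.
have S0 : 0 <= S by apply: sumr_ge0 => j _; rewrite mulr_ge0 //; case: (IH0 j).
have S1 : S <= 1.
  rewrite -(stoch_row HP (last ord0 s)); apply: ler_sum => j _.
  by rewrite ler_piMr //; case: (IH0 j).
by rewrite mulr_ge0 ?safe_ge0 //= -(mul1r 1) ler_pM ?safe_ge0 ?safe_le1.
Qed.

Lemma survival_ge0 k s : 0 <= survival k s. Proof. by case/andP: (survival_bounds k s). Qed.
Lemma survival_le1 k s : survival k s <= 1. Proof. by case/andP: (survival_bounds k s). Qed.

Lemma survival_in_hole k s : in_hole G s -> survival k s = 0.
Proof. by move=> Hs; case: k => [|k] /=; rewrite /safe Hs ?mul0r. Qed.

Lemma survivalS_le k s : survival k.+1 s <= survival k s.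
Proof.
elim: k s => [|k IH] s.
  rewrite /= -{2}(mulr1 (safe s)) ler_wpM2l ?safe_ge0 // -(stoch_row HP (last ord0 s)).
  by apply: ler_sum => j _; rewrite ler_piMr ?safe_le1.
rewrite [survival k.+2 s]/= [survival k.+1 s]/= ler_wpM2l ?safe_ge0 //.
by apply: ler_sum => j _; rewrite ler_wpM2l ?IH.
Qed.

Lemma survival_anti k k' s : (k <= k')%N -> survival k' s <= survival k s.
Proof.
move=> /subnK <-; elim: (k' - k)%N => [|d IH]; first by rewrite add0n.
by rewrite addSn (le_trans (survivalS_le _ _)).
Qed.

Lemma survives_cons m x s t : survives G m.+1 ((x :: s) ++ t) =
  ~~ in_hole G ((x :: s) ++ t) && survives G m (s ++ t).
Proof.
have iotaS k : iota 0 k.+1 = 0 :: map succn (iota 0 k).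
  by rewrite /= -[1%N]/(1 + 0)%N iotaDl.
by rewrite /survives [iota 0 m.+2]iotaS /= drop0 all_map.
Qed.

Lemma mu_cyl_cat s e : s != [::] ->
  mu_cyl P p (s ++ e) = mu_cyl P p s * trans_prod P (last ord0 s) e.
Proof. by case: s => [|a s] //= _; rewrite trans_prod_cat mulrA. Qed.

Lemma size_maxlen_neq0 (s : seq sym) : size s = L -> s != [::].
Proof. by move=> Ls; apply/eqP => s0; move: maxlen_gt0; rewrite -Ls s0. Qed.

Lemma survival_tuple_sum m s : size s = L ->
  survival m s = tuple_sum m (fun e => if survives G m (s ++ e)
                                      then trans_prod P (last ord0 s) e else 0).
Proof.
elim: m s => [|m IH] s Ls.
  by rewrite tuple_sum0 /= /survives /= drop0 cats0 /safe; case: (in_hole G s).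
rewrite tuple_sumS.
case: s Ls (size_maxlen_neq0 Ls) => // x s Ls _.
case hole: (in_hole G (x :: s)).
  rewrite /= /safe hole mul0r; apply/esym/big1 => j _; apply: big1 => u _.
  by rewrite survives_cons in_hole_cat ?Ls // hole.
rewrite /= /safe hole mul1r; apply: eq_bigr => j _.
rewrite IH ?size_rcons -?Ls // -tuple_sumZ; apply: eq_tuple_sum => e _.
rewrite survives_cons in_hole_cat ?Ls // hole /= last_rcons cat_rcons.
by case: ifP; rewrite ?mulr0.
Qed.

Lemma mu_W_tuple_sum m : mu_W P p G m = tuple_sum L (fun s => mu_cyl P p s * survival m s).
Proof.
have -> : mu_W P p G m =
    tuple_sum (m + L) (fun u => if survives G m u then mu_cyl P p u else 0).
  by rewrite /mu_W big_mkcond.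
rewrite addnC tuple_sum_cat; apply: eq_tuple_sum => s Ls.
rewrite survival_tuple_sum // -tuple_sumZ; apply: eq_tuple_sum => e _.
by rewrite mu_cyl_cat ?size_maxlen_neq0 //; case: ifP; rewrite ?mulr0.
Qed.

Lemma tuple_sum_mu_cyl : tuple_sum L (mu_cyl P p) = 1.
Proof.
rewrite -(prednK maxlen_gt0) tuple_sumS; case: Hp => _ [<- _].
apply: eq_bigr => j _ /=.
by rewrite (tuple_sumZ _ _ (trans_prod P j)) tuple_sum_trans_prod ?mulr1.
Qed.

Definition max_survival k : R :=
  \big[Num.max/0]_(t : L.-tuple sym | 0 < mu_cyl P p t) survival k t.

Lemma max_survival_ge0 k : 0 <= max_survival k. Proof. exact: bigmax_ge_id. Qed.

Lemma max_survival_le1 k : max_survival k <= 1.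
Proof. by apply: bigmax_le => [|t _]; rewrite ?ler01 ?survival_le1. Qed.

Lemma survival_le_max k s : size s = L -> 0 < mu_cyl P p s -> survival k s <= max_survival k.
Proof.
by move=> /eqP Ls mu_s; have -> : s = Tuple Ls by []; apply: le_bigmax_cond.
Qed.

Lemma mu_W_le_max m : mu_W P p G m <= max_survival m.
Proof.
rewrite mu_W_tuple_sum -[max_survival m]mulr1 -tuple_sum_mu_cyl -tuple_sumZ.
apply: ler_tuple_sum => s Ls; rewrite mulrC.
have [mu_s|] := ltrP 0 (mu_cyl P p s); first by rewrite ler_wpM2r ?mu_cyl_ge0 ?survival_le_max.
move=> mu_s; have -> : mu_cyl P p s = 0 by apply/le_anti; rewrite mu_s mu_cyl_ge0.
by rewrite !mulr0.
Qed.

Lemma mu_W_ge_max : exists2 c : R, 0 < c & forall m, c * max_survival m <= mu_W P p G m.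
Proof.
pose c := \big[Num.min/1]_(t : L.-tuple sym | 0 < mu_cyl P p t) mu_cyl P p t.
have c_gt0 : 0 < c by apply: lt_bigmin; rewrite ?ltr01.
exists c => // m; rewrite -ler_pdivlMl //; apply: bigmax_le => [|t mu_t].
  apply: mulr_ge0; first by rewrite invr_ge0 ltW.
  rewrite mu_W_tuple_sum; apply: tuple_sum_ge0 => s _.
  by rewrite mulr_ge0 ?mu_cyl_ge0 ?survival_ge0.
rewrite ler_pdivlMl //; apply: (@le_trans _ _ (mu_cyl P p t * survival m t)).
  by rewrite ler_wpM2r ?survival_ge0 //; exact: bigmin_le_cond.
rewrite mu_W_tuple_sum.
apply: (ler_tuple_sum_term (F := fun s => mu_cyl P p s * survival m s)).
  by move=> s _; rewrite mulr_ge0 ?mu_cyl_ge0 ?survival_ge0.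
by rewrite size_tuple.
Qed.

Lemma size_slide (s : seq sym) j : size s = L -> size (rcons (behead s) j) = L.
Proof. by move=> Ls; rewrite size_rcons size_behead Ls prednK // maxlen_gt0. Qed.

Lemma mu_cyl_slide_gt0 (s : seq sym) j : size s = L -> 0 < mu_cyl P p s ->
  0 < P (last ord0 s) j -> 0 < mu_cyl P p (rcons (behead s) j).
Proof.
case: s => [|x [|y t]] Ls //=.
- by move: maxlen_gt0; rewrite -Ls.
- by move=> _ Pxj; rewrite mulr1 stationary_gt0.
move=> /(pmulr_gt0_factors (p_ge0 _) (mulr_ge0 (P_ge0 _ _) (trans_prod_ge0 P_ge0 _ _))) [_].
move=> /(pmulr_gt0_factors (P_ge0 _ _) (trans_prod_ge0 P_ge0 _ _)) [_ Pyt] Pj.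
by rewrite trans_prod_rcons !mulr_gt0 ?stationary_gt0.
Qed.

(* After [m + 1] steps the window has been renewed, and what remains to
   survive is bounded uniformly in the new window. *)
Lemma survival_submul m k s : size s = L -> 0 < mu_cyl P p s ->
  survival (m.+1 + k) s <= survival m s * max_survival k.
Proof.
elim: m s => [|m IH] s Ls mu_s.
  rewrite add1n /= ler_wpM2l ?safe_ge0 //.
  rewrite -[max_survival k]mul1r -(stoch_row HP (last ord0 s)) mulr_suml.
  apply: ler_sum => j _; have [Pj|] := ltrP 0 (P (last ord0 s) j).
    by rewrite ler_wpM2l ?P_ge0 // survival_le_max ?size_slide ?mu_cyl_slide_gt0.
  move=> Pj; have -> : P (last ord0 s) j = 0 by apply/le_anti; rewrite Pj P_ge0.
  by rewrite !mul0r.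
rewrite addSn [survival _.+1 s]/= [survival m.+1 s]/= -mulrA ler_wpM2l ?safe_ge0 //.
rewrite mulr_suml; apply: ler_sum => j _; rewrite -mulrA.
have [Pj|] := ltrP 0 (P (last ord0 s) j).
  by rewrite ler_wpM2l ?P_ge0 // IH ?size_slide ?mu_cyl_slide_gt0.
move=> Pj; have -> : P (last ord0 s) j = 0 by apply/le_anti; rewrite Pj P_ge0.
by rewrite !mul0r.
Qed.

Lemma max_survival_submul m k : max_survival (m.+1 + k) <= max_survival m * max_survival k.
Proof.
apply: bigmax_le => [|t mu_t]; first by rewrite mulr_ge0 ?max_survival_ge0.
apply: le_trans (survival_submul _ _ (size_tuple t) mu_t) _.
by rewrite ler_wpM2r ?max_survival_ge0 // survival_le_max ?size_tuple.
Qed.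

Local Notation Q := (taboo_mx P i0).

Lemma survival_ge_taboo m s : size s = L -> i0 \notin s ->
  (Q ^+ m *m (const_mx 1 : 'cV_N)) (last ord0 s) 0 <= survival m s.
Proof.
have safe1 t : i0 \notin t -> safe t = 1.
  move=> i0t; rewrite /safe ifF //; apply/hasP => -[w /HGsym i0w].
  by rewrite prefixE => /eqP wt; move: i0w; rewrite -wt => /mem_take; apply/negP.
elim: m s => [|m IH] s Ls i0s; first by rewrite expr0 mul1mx mxE /= safe1.
have last_i0 : last ord0 s != i0.
  case: s Ls i0s (size_maxlen_neq0 Ls) => // x t _ i0s _.
  by apply: contraNneq i0s => <- /=; exact: mem_last.
rewrite exprS -mulmxE -mulmxA mxE /= safe1 // mul1r; apply: ler_sum => j _.
rewrite [Q _ j]mxE last_i0 /=; case: (eqVneq j i0) => [->|j_i0] /=.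
  by rewrite mul0r mulr_ge0 ?P_ge0 ?survival_ge0.
rewrite ler_wpM2l ?P_ge0 //; have := IH _ (size_slide j Ls); rewrite last_rcons; apply.
by rewrite mem_rcons inE negb_or eq_sym j_i0; apply: contra i0s; apply: mem_behead.
Qed.

Lemma trans_prod_taboo_notin b c : b != i0 -> 0 < trans_prod Q b c -> i0 \notin b :: c.
Proof.
elim: c b => [|d c IH] b b_i0 /=; first by rewrite inE eq_sym.
move=> /(pmulr_gt0_factors (taboo_ge0 i0 HP _ _) (trans_prod_ge0 (taboo_ge0 i0 HP) _ _)) [Qbd].
have d_i0 : d != i0 by apply: contraTneq Qbd => ->; rewrite mxE eqxx andbF ltxx.
by rewrite inE negb_or eq_sym b_i0 /=; apply: IH.
Qed.

(* A path of the taboo chain of length [L - 1] is an admissible first window. *)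
Lemma taboo_le_max_survival l m b : L = l.+1 -> b != i0 ->
  (Q ^+ (l + m) *m (const_mx 1 : 'cV_N)) b 0 <= N%:R * max_survival m.
Proof.
move=> Ll b_i0; rewrite exprD -mulmxE -mulmxA mxE.
apply: (@le_trans _ _ (\sum_(a : sym) max_survival m)); last first.
  by rewrite sumr_const card_ord mulr_natl.
apply: ler_sum => a _.
have [Qlba|] := ltrP 0 ((Q ^+ l) b a); last first.
  move=> Qlba; have -> : (Q ^+ l) b a = 0.
    by apply/le_anti; rewrite Qlba; exact: (mxpow_ge0 (taboo_ge0 i0 HP)).
  by rewrite mul0r max_survival_ge0.
have [c [lc <- Qc]] := mxpow_gt0_path (taboo_ge0 i0 HP) Qlba.
have /andP[Qm0 _] := taboo_pow_rowsum i0 HP m (last b c).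
have Ls : size (b :: c) = L by rewrite /= lc Ll.
have mu_bc : 0 < mu_cyl P p (b :: c).
  rewrite /= mulr_gt0 ?stationary_gt0 //; apply: lt_le_trans Qc _.
  by apply: ler_trans_prod; [exact: taboo_ge0 | exact: taboo_le].
apply: (@le_trans _ _ (1 * (Q ^+ m *m (const_mx 1 : 'cV_N)) (last b c) 0)).
  by apply: ler_wpM2r; [exact: Qm0 | exact: taboo_pow_le1].
rewrite mul1r; apply: le_trans (survival_le_max m Ls mu_bc).
by have := survival_ge_taboo m Ls (trans_prod_taboo_notin b_i0 Qc).
Qed.

(* [segment x k l] lists [x (k+1), ..., x (k+l)]. *)
Fixpoint segment (x : nat -> sym) (k l : nat) : seq sym :=
  if l is l'.+1 then x k.+1 :: segment x k.+1 l' else [::].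

Lemma size_segment x k l : size (segment x k l) = l.
Proof. by elim: l k => [|l IH] k //=; rewrite IH. Qed.

Lemma segment_trans_prod_gt0 x k l : in_SigmaA A x -> 0 < trans_prod P (x k) (segment x k l).
Proof.
move=> Ax; elim: l k => [|l IH] k /=; first exact: ltr01.
by rewrite mulr_gt0 ?IH //; apply/HAP/Ax.
Qed.

Lemma nth_segment x k l t : (t <= l)%N -> nth ord0 (x k :: segment x k l) t = x (k + t)%N.
Proof.
elim: l k t => [|l IH] k [|t] //= t_le; rewrite ?addn0 //.
by rewrite IH // addSnnS.
Qed.

(* Following the continuation [e], the chain hits the hole after [size e]
   steps, so the survival probability loses at least the weight of [e]. *)
Lemma survival_le_escape e s k : size s = L -> (size e <= k)%N ->
  in_hole G (drop (size e) (s ++ e)) -> survival k s <= 1 - trans_prod P (last ord0 s) e.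
Proof.
elim: e s k => [|j e IH] s k Ls ek hole.
  by rewrite drop0 cats0 in hole; rewrite survival_in_hole //= subrr.
case: k ek => // k ek.
case s_hole: (in_hole G s); first by rewrite survival_in_hole // subr_ge0 trans_prod_le1.
rewrite /= /safe s_hole mul1r; set a := last ord0 s.
have hole' : in_hole G (drop (size e) (rcons (behead s) j ++ e)).
  by case: s Ls (size_maxlen_neq0 Ls) hole {a s_hole} => // x s' _ _ /=; rewrite cat_rcons.
have := IH _ _ (size_slide j Ls) ek hole'; rewrite last_rcons => IHj.
have row_a := stoch_row HP a; rewrite (bigD1 j) //= in row_a.
rewrite (bigD1 j) //=.
have rest : \sum_(l | l != j) P a l * survival k (rcons (behead s) l)
            <= \sum_(l | l != j) P a l.
  by apply: ler_sum => l _; rewrite ler_piMr ?P_ge0 ?survival_le1.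
have := lerD (ler_wpM2l (P_ge0 a j) IHj) rest.
by rewrite mulrBr mulr1 -row_a addrAC.
Qed.

Lemma exists_escape s : size s = L -> exists k, survival k s < 1.
Proof.
move=> Ls.
have [w Gw] : exists w, w \in G by case: G HGne => // w G' _; exists w; exact: mem_head.
have [x [Ax [k xw]]] := HGall Gw.
have [l Ll] : exists l, L = l.+1 by exists L.-1; rewrite prednK // maxlen_gt0.
have [j Pj] : exists j, 0 < P (last ord0 s) j.
  have [j /andP[_ Pj]] : exists j, true && (0 < P (last ord0 s) j).
    apply: psumr_neq0P => [j _|]; first exact: P_ge0.
    by rewrite stoch_row //; exact/eqP/oner_neq0.
  by exists j.
have [c [cx Pc]] := irreducible_path j (x k).
set e := (j :: c) ++ segment x k l; exists (size e).
have Pe : 0 < trans_prod P (last ord0 s) e.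
  by rewrite /e trans_prod_cat /= cx !mulr_gt0 ?segment_trans_prod_gt0.
have hole : in_hole G (drop (size e) (s ++ e)).
  have -> : drop (size e) (s ++ e) = x k :: segment x k l.
    rewrite /e lastI cx cat_rcons catA drop_size_cat //.
    by rewrite !size_cat /= size_segment Ls Ll addnC.
  apply/hasP; exists w => //; rewrite prefixE; apply/eqP.
  have wl : (size w <= l.+1)%N by rewrite -Ll size_le_maxlen.
  apply: (@eq_from_nth _ ord0) => [|t]; first by rewrite size_takel //= size_segment.
  rewrite size_takel /= ?size_segment // => tw.
  by rewrite nth_take // nth_segment ?xw // -ltnS (leq_trans tw).
apply: le_lt_trans (survival_le_escape Ls (leqnn _) hole) _.
by rewrite ltrBlDr ltrDl.
Qed.

Lemma max_survival_lt1 : exists K, max_survival K < 1.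
Proof.
have [f fP] := fin_all_exists (fun t : L.-tuple sym => exists_escape (size_tuple t)).
exists (\max_(t : L.-tuple sym) f t); apply/bigmax_ltP; split => [|t _]; first exact: ltr01.
by apply: le_lt_trans (fP t); apply: survival_anti; apply: (leq_bigmax (F := f)).
Qed.

Lemma max_survival_decay_rate theta C r : eigenvalue P theta -> 0 < theta -> theta != 1 ->
  0 <= C -> 0 < r -> (forall m, max_survival m <= C * r ^+ m) -> Num.min theta 1 <= r.
Proof.
move=> eig th0 th1 C0 r0 decay.
have [r_ge1|r1] := leP 1 r; first by rewrite ge_min r_ge1 orbT.
have [l Ll] : exists l, L = l.+1 by exists L.-1; rewrite prednK // maxlen_gt0.
have rl : 0 < r ^+ l by rewrite exprn_gt0.
apply: (taboo_decay_rate_ge (i0 := i0) (C := (N%:R * C + 1) / r ^+ l)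
  HP th0 _ (ltW r0) _ eig th1).
  by rewrite divr_ge0 ?addr_ge0 ?mulr_ge0 ?ler0n ?ler01 // ltW.
move=> k a b a_i0; have [lk|kl] := leqP l k.
  rewrite -(subnKC lk); set m := (k - l)%N.
  apply: le_trans (taboo_pow_le_rowsum i0 HP _ _ _) _.
  apply: le_trans (taboo_le_max_survival m Ll a_i0) _.
  apply: le_trans (ler_wpM2l (ler0n _ _) (decay m)) _.
  rewrite exprD mulrA divfK ?gt_eqF //.
  by rewrite mulrA; apply: ler_wpM2r; rewrite ?exprn_ge0 ?lerDl ?ler01 // ltW.
apply: le_trans (taboo_pow_le1 i0 HP _ _ _) _.
rewrite mulrAC ler_pdivlMr // mul1r.
apply: le_trans (ler_wiXn2l (ltW r0) (ltW r1) (ltnW kl)) _.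
apply: ler_peMl; first by rewrite exprn_ge0 // ltW.
by rewrite lerDr mulr_ge0.
Qed.

Definition survival_exponent m : R := - ln (max_survival m).

Lemma survival_exponent_ge0 m : 0 <= survival_exponent m.
Proof. by rewrite oppr_ge0 ln_le0 ?max_survival_le1. Qed.

Section Exponent.
Variable theta : R.
Hypotheses (theta_eig : eigenvalue P theta) (theta_gt0 : 0 < theta) (theta_ne1 : theta != 1).

Lemma max_survival_gt0 m : 0 < max_survival m.
Proof.
rewrite lt_def max_survival_ge0 andbT; apply/negP => /eqP Bm0.
have Bm_ge0 k : max_survival (m + k) = 0.
  case: k => [|k]; first by rewrite addn0.
  apply/le_anti; rewrite max_survival_ge0 andbT addnS -addSn.
  by apply: le_trans (max_survival_submul _ _) _; rewrite Bm0 mul0r.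
pose r := Num.min theta 1 / 2.
have min_gt0 : 0 < Num.min theta 1 by rewrite lt_min theta_gt0 ltr01.
have r0 : 0 < r by rewrite divr_gt0.
have r_lt_min : r < Num.min theta 1 by rewrite ltr_pdivrMr // ltr_pMr // ltr1n.
have r1 : r < 1 by apply: lt_le_trans r_lt_min _; rewrite ge_min lexx orbT.
suff : Num.min theta 1 <= r by rewrite leNgt r_lt_min.
apply: (max_survival_decay_rate theta_eig theta_gt0 theta_ne1 (C := (r ^+ m)^-1)) => //.
  by rewrite invr_ge0 exprn_ge0 // ltW.
move=> k; have [mk|km] := leqP m k.
  by rewrite -(subnKC mk) Bm_ge0 mulr_ge0 ?invr_ge0 ?exprn_ge0 ?ltW.
apply: le_trans (max_survival_le1 k) _.
rewrite mulrC ler_pdivlMr ?exprn_gt0 // mul1r.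
by apply: (ler_wiXn2l (ltW r0) (ltW r1)); exact: ltnW.
Qed.

Lemma survival_exponent_superadd m k :
  survival_exponent m + survival_exponent k <= survival_exponent (m.+1 + k).
Proof.
rewrite /survival_exponent -opprD lerN2 -lnM ?posrE ?max_survival_gt0 //.
by rewrite ler_ln ?posrE ?mulr_gt0 ?max_survival_gt0 // max_survival_submul.
Qed.

Lemma survival_exponent_ratio_le k :
  survival_exponent k / k.+1%:R <= Num.max (- ln theta) 0.
Proof.
rewrite leNgt; apply/negP; rewrite gt_max => /andP[al_gt al_gt0].
set al := survival_exponent k / _ in al_gt al_gt0.
pose r := expR (- al).
have r0 : 0 < r by apply: expR_gt0.
have r1 : r < 1 by rewrite expR_lt1 oppr_lt0.
have r_th : r < theta by rewrite -[theta]lnK ?posrE // ltr_expR ltrNl.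
suff : Num.min theta 1 <= r by rewrite leNgt lt_min r_th r1.
apply: (max_survival_decay_rate theta_eig theta_gt0 theta_ne1
  (C := expR (survival_exponent k))) => // m.
have Bm : max_survival m = expR (- survival_exponent m).
  by rewrite opprK lnK // posrE max_survival_gt0.
rewrite Bm /r -expRM_natl -expRD ler_expR.
have := superadd_lower survival_exponent_ge0 survival_exponent_superadd k m.
have -> : (m.+1%:R / k.+1%:R - 1) * survival_exponent k = m.+1%:R * al - survival_exponent k.
  by rewrite /al mulrBl mul1r mulrAC -mulrA.
rewrite -natr1; lra.
Qed.

Lemma cvg_escape_rate :
  (fun m => - (ln (mu_W P p G m) / m%:R)) @ \oo --> growth_rate survival_exponent.
Proof.
have [c c_gt0 c_le] := mu_W_ge_max.
under eq_fun do rewrite -mulNr.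
apply: (cvg_perturbed_superadd survival_exponent_ge0 survival_exponent_superadd
  survival_exponent_ratio_le (kappa := - ln c)) => m.
have B_gt0 := max_survival_gt0 m.
have mu_gt0 : 0 < mu_W P p G m by apply: lt_le_trans (c_le m); rewrite mulr_gt0.
have up : ln (mu_W P p G m) <= ln (max_survival m) by rewrite ler_ln ?posrE ?mu_W_le_max.
have low : ln c + ln (max_survival m) <= ln (mu_W P p G m).
  by rewrite -lnM ?posrE // ler_ln ?posrE ?mulr_gt0.
by rewrite /survival_exponent ler_norml; apply/andP; split; lra.
Qed.

Lemma escape_rate_gt0 : 0 < growth_rate survival_exponent.
Proof.
have [K BK] := max_survival_lt1.
apply: lt_le_trans (ratio_le_growth_rate survival_exponent_ratio_le K).
by rewrite divr_gt0 // oppr_gt0 ln_lt0 // max_survival_gt0.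
Qed.

Lemma escape_rate_le : growth_rate survival_exponent <= - ln theta.
Proof.
have := growth_rate_le survival_exponent_ratio_le; rewrite le_max => /orP[] // rate_le0.
by move: escape_rate_gt0; rewrite ltNge rate_le0.
Qed.

End Exponent.
End Survival.

Theorem corollary3p5 (R : realType) (n : nat)
  (A P : 'M[R]_n.+1) (p : 'rV[R]_n.+1)
  (HA01 : zero_one_mx A) (HAirr : irreducible_mx A)
  (HP : row_stochastic P) (HAP : compatible A P) (Hp : stationary P p)
  (theta : R)
  (Htheta_eig : eigenvalue P theta) (Htheta_pos : 0 < theta) (Htheta_ne1 : theta != 1)
  (Htheta_max : forall lambda : R, eigenvalue P lambda -> 0 < lambda -> lambda != 1 ->
                  lambda <= theta)
  (G : seq (seq 'I_n.+1))
  (HGne : G != [::])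
  (HGall : forall w, w \in G -> allowed A w)
  (HGsym : exists i : 'I_n.+1, forall w, w \in G -> i \in w) :
  exists rho : R,
    (fun m : nat => - (ln (mu_W P p G m) / m%:R)) @ \oo --> rho /\
    0 < rho /\ rho <= - ln theta.
Proof.
have [i Gi] := HGsym.
exists (growth_rate (survival_exponent P p G)); split; last split.
- exact: (cvg_escape_rate HA01 HAirr HP HAP Hp HGne Gi Htheta_eig Htheta_pos Htheta_ne1).
- exact: (escape_rate_gt0 HA01 HAirr HP HAP Hp HGne HGall Gi Htheta_eig Htheta_pos Htheta_ne1).
- exact: (escape_rate_le HA01 HAirr HP HAP Hp HGne HGall Gi Htheta_eig Htheta_pos Htheta_ne1).
Qed.
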